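(* Let $X$ be a normed space and let $Y$ be a weakly sequentially complete Banach space ordered by a closed convex normal cone $K\subset Y$. Let $\alpha:\mathbb{R}_+\to\mathbb{R}_+$ be nondecreasing with $\lim_{t\to0^+}\alpha(t)/t=0$. Let $A\subset X$ be convex, let $k_0\in K\setminus\{0\}$, and let $F:X\to Y$ be strongly $\alpha(\cdot)$-$k_0$ paraconvex on $A$ with constant $C\ge 0$. Let $x_0\in A$ and $h\in X$ with $\|h\|=1$ be such that there is $\delta_0>0$ with $x_0+th\in A$ for all $t\in(-\delta_0,\delta_0)$. Then the directional derivative $$F'(x_0;h):=\lim_{t\to0^+}\frac{F(x_0+th)-F(x_0)}{t}$$ exists, the limit being taken in the norm topology of $Y$.
   Context: For a convex cone $K\subset Y$, write $x\le_K y$ iff $y-x\in K$. A cone $K$ in a normed space $Y$ is normal if there is a constant $c>0$ such that $0\le_K x\le_K y$ implies $\|x\|\le c\|y\|$. A mapping $F:X\to Y$ is strongly $\alpha(\cdot)$-$k_0$ paraconvex on a convex set $A\subset X$ with constant $C\ge0$ (where $k_0\in K$) if for all $x_1,x_2\in A$ and all $\lambda\in[0,1]$, $$F(\lambda x_1+(1-\lambda)x_2)\le_K \lambda F(x_1)+(1-\lambda)F(x_2)+C\min\{\lambda,1-\lambda\}\,\alpha(\|x_1-x_2\|)\,k_0.$$ *)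

From Stdlib Require Import Reals Lra.
Open Scope R_scope.

Record NormedSpace : Type := mkNormedSpace {
  ns_car :> Type;
  vzero : ns_car;
  vadd : ns_car -> ns_car -> ns_car;
  vopp : ns_car -> ns_car;
  vscal : R -> ns_car -> ns_car;
  vnorm : ns_car -> R;
  vadd_assoc : forall x y z, vadd x (vadd y z) = vadd (vadd x y) z;
  vadd_comm : forall x y, vadd x y = vadd y x;
  vadd_0 : forall x, vadd x vzero = x;
  vadd_opp : forall x, vadd x (vopp x) = vzero;
  vscal_1 : forall x, vscal 1 x = x;
  vscal_assoc : forall a b x, vscal a (vscal b x) = vscal (a * b) x;
  vscal_distr_v : forall a x y, vscal a (vadd x y) = vadd (vscal a x) (vscal a y);
  vscal_distr_r : forall a b x, vscal (a + b) x = vadd (vscal a x) (vscal b x);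
  vnorm_eq0 : forall x, vnorm x = 0 -> x = vzero;
  vnorm_scal : forall a x, vnorm (vscal a x) = Rabs a * vnorm x;
  vnorm_triangle : forall x y, vnorm (vadd x y) <= vnorm x + vnorm y
}.

Arguments vzero {n}.
Arguments vadd {n} _ _.
Arguments vopp {n} _.
Arguments vscal {n} _ _.
Arguments vnorm {n} _.

Definition vsub {X : NormedSpace} (x y : X) : X := vadd x (vopp y).

Definition seq_lim {X : NormedSpace} (u : nat -> X) (l : X) : Prop :=
  forall eps, 0 < eps -> exists N, forall n, (n >= N)%nat -> vnorm (vsub (u n) l) < eps.

Definition seq_cauchy {X : NormedSpace} (u : nat -> X) : Prop :=
  forall eps, 0 < eps -> exists N, forall m n, (m >= N)%nat -> (n >= N)%nat ->
    vnorm (vsub (u m) (u n)) < eps.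

Definition banach (X : NormedSpace) : Prop :=
  forall u : nat -> X, seq_cauchy u -> exists l, seq_lim u l.

Definition cont_lin_functional {X : NormedSpace} (f : X -> R) : Prop :=
  (forall x y, f (vadd x y) = f x + f y) /\
  (forall a x, f (vscal a x) = a * f x) /\
  (exists M, forall x, Rabs (f x) <= M * vnorm x).

Definition weakly_cauchy {X : NormedSpace} (u : nat -> X) : Prop :=
  forall f : X -> R, cont_lin_functional f -> Cauchy_crit (fun n => f (u n)).

Definition weakly_converges {X : NormedSpace} (u : nat -> X) (l : X) : Prop :=
  forall f : X -> R, cont_lin_functional f -> Un_cv (fun n => f (u n)) (f l).

Definition weakly_seq_complete (X : NormedSpace) : Prop :=
  forall u : nat -> X, weakly_cauchy u -> exists l, weakly_converges u l.

Definition convex_cone {Y : NormedSpace} (K : Y -> Prop) : Prop :=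
  K vzero /\
  (forall x y, K x -> K y -> K (vadd x y)) /\
  (forall t x, 0 <= t -> K x -> K (vscal t x)).

Definition ns_closed_set {Y : NormedSpace} (K : Y -> Prop) : Prop :=
  forall (u : nat -> Y) l, (forall n, K (u n)) -> seq_lim u l -> K l.

Definition cone_le {Y : NormedSpace} (K : Y -> Prop) (x y : Y) : Prop := K (vsub y x).

Definition normal_cone {Y : NormedSpace} (K : Y -> Prop) : Prop :=
  exists c, 0 < c /\ forall x y, cone_le K vzero x -> cone_le K x y -> vnorm x <= c * vnorm y.

Definition ns_convex_set {X : NormedSpace} (A : X -> Prop) : Prop :=
  forall x1 x2 lam, A x1 -> A x2 -> 0 <= lam <= 1 ->
    A (vadd (vscal lam x1) (vscal (1 - lam) x2)).

Definition strongly_paraconvex {X Y : NormedSpace} (K : Y -> Prop) (alpha : R -> R)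
    (k0 : Y) (F : X -> Y) (A : X -> Prop) (C : R) : Prop :=
  forall x1 x2 lam, A x1 -> A x2 -> 0 <= lam <= 1 ->
    cone_le K (F (vadd (vscal lam x1) (vscal (1 - lam) x2)))
      (vadd (vadd (vscal lam (F x1)) (vscal (1 - lam) (F x2)))
            (vscal (C * Rmin lam (1 - lam) * alpha (vnorm (vsub x1 x2))) k0)).

(* Hypotheses on alpha : R_+ -> R_+ (represented as R -> R, only values on [0,oo) matter). *)
Definition admissible_alpha (alpha : R -> R) : Prop :=
  (forall t, 0 <= t -> 0 <= alpha t) /\
  (forall s t, 0 <= s -> s <= t -> alpha s <= alpha t) /\
  (forall eps, 0 < eps -> exists d, 0 < d /\ forall t, 0 < t < d -> Rabs (alpha t / t) < eps).

(* Along the ray x0 + t h, paraconvexity makes the difference quotient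
   q(t) = (F(x0 + t h) - F(x0)) / t almost nondecreasing, q(s) <= q(t) + e(t) k0 for s <= t
   with e(t) = C alpha(t) / t -> 0, and bounds it below by a fixed vector.  Along a sequence
   t_n decreasing to 0 with e(t_n) <= 2^-n the increments of q(t_n) are almost positive and
   their partial sums stay below a fixed vector, so in a normal cone every functional has
   bounded variation along q(t_n): the sequence is weakly Cauchy and has a weak limit d.
   Mazur's lemma (from a Hahn-Banach separation, itself proved with Zorn's lemma) turns this
   into order information, d <= q(t) + e(t) k0 and q(s) - d <= v for vectors v of arbitrarily
   small norm, and normality of the cone squeezes q(s) to d in norm. *)

From Stdlib Require Import Reals Lra Lia List Classical IndefiniteDescription.
From mathcomp Require boolp classical_sets.
Import ListNotations.
Open Scope R_scope.

Arguments vadd_assoc {n}.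
Arguments vadd_comm {n}.
Arguments vadd_0 {n}.
Arguments vadd_opp {n}.
Arguments vscal_1 {n}.
Arguments vscal_assoc {n}.
Arguments vscal_distr_v {n}.
Arguments vscal_distr_r {n}.
Arguments vnorm_scal {n}.
Arguments vnorm_triangle {n}.

Section VectorAlgebra.
Variable V : NormedSpace.
Implicit Types x y z : V.

Lemma vadd_0l x : vadd vzero x = x.
Proof. rewrite vadd_comm; apply vadd_0. Qed.

Lemma vadd_cancel_l x y z : vadd x y = vadd x z -> y = z.
Proof.
  intro H. rewrite <- (vadd_0l y), <- (vadd_0l z), <- (vadd_opp x), (vadd_comm x (vopp x)).
  rewrite <- !vadd_assoc, H; reflexivity.
Qed.

Lemma vscal_0l x : vscal 0 x = vzero.
Proof.
  apply (vadd_cancel_l (vscal 0 x)). rewrite vadd_0, <- vscal_distr_r, Rplus_0_r; reflexivity.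
Qed.

Lemma vscal_0r a : vscal a (@vzero V) = vzero.
Proof.
  apply (vadd_cancel_l (vscal a vzero)). rewrite vadd_0, <- vscal_distr_v, vadd_0; reflexivity.
Qed.

Lemma vopp_scal x : vopp x = vscal (-1) x.
Proof.
  apply (vadd_cancel_l x). rewrite vadd_opp. rewrite <- (vscal_1 x) at 1.
  rewrite <- vscal_distr_r. replace (1 + -1) with 0 by ring. rewrite vscal_0l; reflexivity.
Qed.

Lemma vsub_eq0 x y : vsub x y = vzero -> x = y.
Proof.
  unfold vsub; intro H. apply (vadd_cancel_l (vopp y)).
  rewrite (vadd_comm _ x), H, vadd_comm, vadd_opp; reflexivity.
Qed.

Lemma vadd_add4 x y z (w : V) : vadd (vadd x y) (vadd z w) = vadd (vadd x z) (vadd y w).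
Proof. rewrite !vadd_assoc. f_equal. rewrite <- !vadd_assoc. f_equal. apply vadd_comm. Qed.

Lemma vnorm0 : vnorm (@vzero V) = 0.
Proof. rewrite <- (vscal_0l vzero), vnorm_scal, Rabs_R0; ring. Qed.

Lemma vnorm_opp x : vnorm (vopp x) = vnorm x.
Proof. rewrite vopp_scal, vnorm_scal, Rabs_left by lra; ring. Qed.

Lemma vnorm_ge0 x : 0 <= vnorm x.
Proof.
  pose proof (vnorm_triangle x (vopp x)) as H. rewrite vadd_opp, vnorm0, vnorm_opp in H. lra.
Qed.

End VectorAlgebra.

(* Reflexive normalisation of vector expressions: an expression over atoms [env] is a linear
   combination [lincomb env c] with coefficient list [c]; two expressions are equal when the
   coefficients of their difference all vanish, which is left to [ring]/[field]. *)
Inductive vexpr : Type :=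
  | VAtom (i : nat) | VZero | VAdd (a b : vexpr) | VOpp (a : vexpr) | VScal (r : R) (a : vexpr).

Fixpoint coef_add (a b : list R) : list R :=
  match a, b with
  | [], _ => b
  | _, [] => a
  | r :: a', s :: b' => (r + s) :: coef_add a' b'
  end.

Fixpoint coef_atom (i : nat) : list R :=
  match i with O => [1] | S i' => 0 :: coef_atom i' end.

Fixpoint coefs (e : vexpr) : list R :=
  match e with
  | VAtom i => coef_atom i
  | VZero => []
  | VAdd a b => coef_add (coefs a) (coefs b)
  | VOpp a => map (Rmult (-1)) (coefs a)
  | VScal r a => map (Rmult r) (coefs a)
  end.

Fixpoint all_zero (c : list R) : Prop :=
  match c with [] => True | r :: c' => r = 0 /\ all_zero c' end.

Section Reflection.
Variable V : NormedSpace.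

Fixpoint vdenote (env : list V) (e : vexpr) : V :=
  match e with
  | VAtom i => nth i env vzero
  | VZero => vzero
  | VAdd a b => vadd (vdenote env a) (vdenote env b)
  | VOpp a => vopp (vdenote env a)
  | VScal r a => vscal r (vdenote env a)
  end.

Fixpoint lincomb (env : list V) (c : list R) : V :=
  match env, c with
  | x :: env', r :: c' => vadd (vscal r x) (lincomb env' c')
  | _, _ => vzero
  end.

Lemma lincomb_add env a b : lincomb env (coef_add a b) = vadd (lincomb env a) (lincomb env b).
Proof.
  revert a b; induction env as [|x env IH]; intros [|r a] [|s b]; simpl;
    rewrite ?vadd_0, ?vadd_0l; try reflexivity.
  rewrite IH, vscal_distr_r. apply vadd_add4.
Qed.

Lemma lincomb_scal env r a : lincomb env (map (Rmult r) a) = vscal r (lincomb env a).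
Proof.
  revert a; induction env as [|x env IH]; intros [|s a]; simpl; rewrite ?vscal_0r; try reflexivity.
  rewrite IH, vscal_distr_v, vscal_assoc; reflexivity.
Qed.

Lemma lincomb_atom env i : lincomb env (coef_atom i) = nth i env vzero.
Proof.
  revert i; induction env as [|x env IH]; intros [|i]; simpl; try reflexivity.
  - rewrite vscal_1; destruct env; apply vadd_0.
  - rewrite vscal_0l, vadd_0l; apply IH.
Qed.

Lemma vdenote_lincomb env e : vdenote env e = lincomb env (coefs e).
Proof.
  induction e; simpl.
  - symmetry; apply lincomb_atom.
  - destruct env; reflexivity.
  - rewrite lincomb_add, IHe1, IHe2; reflexivity.
  - rewrite lincomb_scal, IHe, vopp_scal; reflexivity.
  - rewrite lincomb_scal, IHe; reflexivity.
Qed.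

Lemma lincomb_all_zero env c : all_zero c -> lincomb env c = vzero.
Proof.
  revert c; induction env as [|x env IH]; intros [|r c]; simpl; try reflexivity.
  intros [-> Hc]. rewrite IH, vscal_0l by exact Hc. apply vadd_0.
Qed.

Lemma vdenote_eq env e1 e2 : all_zero (coefs (VAdd e1 (VOpp e2))) ->
  vdenote env e1 = vdenote env e2.
Proof.
  intro H. apply vsub_eq0. rewrite <- (lincomb_all_zero env _ H), <- vdenote_lincomb. reflexivity.
Qed.

End Reflection.

(* A failing [constr_eq] makes [match] fall through to its next branch, so [vindex] fails
   exactly when [t] is not syntactically in [env]. *)
Ltac vindex t env :=
  match env with
  | ?a :: _ => let _ := match goal with _ => constr_eq a t end in constr:(O)
  | _ :: ?env' => let i := vindex t env' in constr:(S i)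
  end.

Ltac vatoms env t :=
  lazymatch t with
  | vzero => env
  | vadd ?a ?b => let env := vatoms env a in vatoms env b
  | vsub ?a ?b => let env := vatoms env a in vatoms env b
  | vopp ?a => vatoms env a
  | vscal _ ?a => vatoms env a
  | _ => match env with
         | _ => let _ := vindex t env in env
         | _ => constr:(t :: env)
         end
  end.

Ltac vreify env t :=
  lazymatch t with
  | vzero => constr:(VZero)
  | vadd ?a ?b => let ra := vreify env a in let rb := vreify env b in constr:(VAdd ra rb)
  | vsub ?a ?b => let ra := vreify env a in let rb := vreify env b in constr:(VAdd ra (VOpp rb))
  | vopp ?a => let ra := vreify env a in constr:(VOpp ra)
  | vscal ?r ?a => let ra := vreify env a in constr:(VScal r ra)
  | _ => let i := vindex t env in constr:(VAtom i)
  end.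

Ltac vec_eq :=
  lazymatch goal with
  | |- @eq (ns_car ?V) ?x ?y =>
      let env := vatoms (@nil (ns_car V)) x in
      let env := vatoms env y in
      let ex := vreify env x in
      let ey := vreify env y in
      change (vdenote V env ex = vdenote V env ey);
      apply vdenote_eq; simpl; repeat split
  end.

Ltac vring := vec_eq; ring.

Definition is_glb (E : R -> Prop) (m : R) : Prop :=
  (forall r, E r -> m <= r) /\ (forall b, (forall r, E r -> b <= r) -> b <= m).

Lemma glb_exists (E : R -> Prop) :
  (exists r, E r) -> (exists b, forall r, E r -> b <= r) -> exists m, is_glb E m.
Proof.
  intros [r0 Er0] [b Hb].
  destruct (completeness (fun r => E (- r))) as [l [Hub Hleast]].
  - exists (- b). intros r Er. specialize (Hb _ Er). lra.
  - exists (- r0). rewrite Ropp_involutive; exact Er0.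
  - exists (- l). split.
    + intros r Er. assert (- r <= l) by (apply Hub; rewrite Ropp_involutive; exact Er). lra.
    + intros b' Hb'. assert (l <= - b') by (apply Hleast; intros r Er; specialize (Hb' _ Er); lra).
      lra.
Qed.

Section Sublinear.
Variable V : NormedSpace.

Definition sublinear (p : V -> R) : Prop :=
  (forall x y, p (vadd x y) <= p x + p y) /\ (forall a x, 0 < a -> p (vscal a x) <= a * p x).

Definition linear_functional (g : V -> R) : Prop :=
  (forall x y, g (vadd x y) = g x + g y) /\ (forall a x, g (vscal a x) = a * g x).

Lemma sublinear_homog p : sublinear p -> forall a x, 0 < a -> p (vscal a x) = a * p x.
Proof.
  intros [_ Hh] a x Ha. apply Rle_antisym; [now apply Hh|].
  assert (Hinv := Hh (/ a) (vscal a x) (Rinv_0_lt_compat _ Ha)).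
  replace (vscal (/ a) (vscal a x)) with x in Hinv by (vec_eq; field; lra).
  apply (Rmult_le_compat_l a) in Hinv; [|lra].
  rewrite <- Rmult_assoc, Rinv_r, Rmult_1_l in Hinv; lra.
Qed.

Lemma sublinear_0 p : sublinear p -> p vzero = 0.
Proof.
  intros [Hadd Hh]. pose proof (Hadd vzero vzero) as H1. pose proof (Hh (/2) vzero) as H2.
  rewrite vadd_0 in H1. rewrite vscal_0r in H2. lra.
Qed.

Lemma sublinear_scal p : sublinear p -> forall a x, 0 <= a -> p (vscal a x) = a * p x.
Proof.
  intros Hp a x Ha. destruct (Req_dec a 0) as [->|Ha0].
  - rewrite vscal_0l, sublinear_0 by exact Hp; ring.
  - apply sublinear_homog; auto; lra.
Qed.

Lemma sublinear_opp p : sublinear p -> forall x, - p (vopp x) <= p x.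
Proof.
  intros Hp x. pose proof (proj1 Hp x (vopp x)) as H. rewrite vadd_opp, sublinear_0 in H; auto. lra.
Qed.

Lemma sublinear_glb (E : V -> R -> Prop) :
  (forall y, exists r, E y r) -> (forall y, exists b, forall r, E y r -> b <= r) ->
  (forall x y r1 r2, E x r1 -> E y r2 -> exists r, E (vadd x y) r /\ r <= r1 + r2) ->
  (forall a x r, 0 < a -> E x r -> exists r', E (vscal a x) r' /\ r' <= a * r) ->
  exists p, sublinear p /\ forall y, is_glb (E y) (p y).
Proof.
  intros Hne Hbd Hadd Hhom.
  destruct (functional_choice (fun y m => is_glb (E y) m)) as [p Hp].
  { intros y; apply glb_exists; auto. }
  exists p; split; [split|exact Hp].
  - intros x y.
    assert (p (vadd x y) - p y <= p x); [|lra].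
    apply (proj2 (Hp x)); intros r1 E1.
    assert (p (vadd x y) - r1 <= p y); [|lra].
    apply (proj2 (Hp y)); intros r2 E2.
    destruct (Hadd x y r1 r2 E1 E2) as [r [Er Hr]].
    pose proof (proj1 (Hp (vadd x y)) r Er); lra.
  - intros a x Ha.
    assert (p (vscal a x) / a <= p x).
    { apply (proj2 (Hp x)); intros r Er.
      destruct (Hhom a x r Ha Er) as [r' [Er' Hr']].
      pose proof (proj1 (Hp (vscal a x)) r' Er').
      apply (Rmult_le_reg_l a); auto. field_simplify; lra. }
    apply (Rmult_le_compat_l a) in H; [|lra]. field_simplify in H; lra.
Qed.

(* The witness is [r y = inf {q (y + t x) - t q x : t >= 0}]. *)
Lemma sublinear_below_at_opp q x : sublinear q ->
  exists r, sublinear r /\ (forall y, r y <= q y) /\ r (vopp x) <= - q x.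
Proof.
  intros Hq.
  set (E := fun y r => exists t, 0 <= t /\ r = q (vadd y (vscal t x)) - t * q x).
  destruct (sublinear_glb E) as [r [Hr Hglb]].
  - intros y. exists (q (vadd y (vscal 0 x)) - 0 * q x), 0; split; [lra|reflexivity].
  - intros y. exists (- q (vopp y)). intros ? [t [Ht ->]].
    pose proof (proj1 Hq (vadd y (vscal t x)) (vopp y)) as H.
    replace (vadd (vadd y (vscal t x)) (vopp y)) with (vscal t x) in H by vring.
    rewrite sublinear_scal in H; auto. lra.
  - intros y1 y2 ? ? [t1 [Ht1 ->]] [t2 [Ht2 ->]].
    exists (q (vadd (vadd y1 y2) (vscal (t1 + t2) x)) - (t1 + t2) * q x). split.
    + exists (t1 + t2); split; [lra|reflexivity].
    + pose proof (proj1 Hq (vadd y1 (vscal t1 x)) (vadd y2 (vscal t2 x))) as H.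
      replace (vadd (vadd y1 (vscal t1 x)) (vadd y2 (vscal t2 x)))
        with (vadd (vadd y1 y2) (vscal (t1 + t2) x)) in H by vring.
      lra.
  - intros a y ? Ha [t [Ht ->]].
    exists (q (vadd (vscal a y) (vscal (a * t) x)) - (a * t) * q x). split.
    + exists (a * t); split; [apply Rmult_le_pos; lra|reflexivity].
    + replace (vadd (vscal a y) (vscal (a * t) x)) with (vscal a (vadd y (vscal t x))) by vring.
      rewrite sublinear_homog by auto. lra.
  - exists r; split; [exact Hr|split].
    + intros y. apply (proj1 (Hglb y)). exists 0. split; [lra|].
      rewrite vscal_0l, vadd_0; ring.
    + assert (H : r (vopp x) <= q (vadd (vopp x) (vscal 1 x)) - 1 * q x).
      { apply (proj1 (Hglb (vopp x))). exists 1; split; [lra|reflexivity]. }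
      rewrite vscal_1, vadd_comm, vadd_opp, sublinear_0 in H by exact Hq. lra.
Qed.

Lemma minimal_sublinear_linear q : sublinear q ->
  (forall r, sublinear r -> (forall x, r x <= q x) -> forall x, q x <= r x) ->
  linear_functional q.
Proof.
  intros Hq Hmin.
  assert (Hodd : forall x, q (vopp x) = - q x).
  { intros x. destruct (sublinear_below_at_opp q x Hq) as [r [Hr [Hrq Hrx]]].
    pose proof (Hmin r Hr Hrq (vopp x)). pose proof (sublinear_opp q Hq x). lra. }
  split.
  - intros x y. apply Rle_antisym; [apply Hq|].
    pose proof (proj1 Hq (vadd x y) (vopp y)) as H.
    replace (vadd (vadd x y) (vopp y)) with x in H by vring.
    rewrite Hodd in H; lra.
  - intros a x. destruct (Rle_dec 0 a) as [Ha|Ha]; [now apply sublinear_scal|].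
    replace (vscal a x) with (vopp (vscal (- a) x)) by vring.
    rewrite Hodd, sublinear_scal by (auto; lra); ring.
Qed.

End Sublinear.

Lemma zorn_premaximal (T : Type) (t0 : T) (R : T -> T -> Prop) :
  (forall t, R t t) -> (forall r s t, R r s -> R s t -> R r t) ->
  (forall A : T -> Prop, (forall s t, A s -> A t -> R s t \/ R t s) ->
     exists t, forall s, A s -> R s t) ->
  exists t, forall s, R t s -> R s t.
Proof.
  intros Hrefl Htrans Hchain.
  destruct (@classical_sets.ZL_preorder T t0 (fun s t => boolp.asbool (R s t))) as [t Ht].
  - intros s; apply boolp.asboolT, Hrefl.
  - intros r s u Hrs Hsu; apply boolp.asboolT.
    exact (Htrans r s u (boolp.asboolW Hrs) (boolp.asboolW Hsu)).
  - intros A Htot. destruct (Hchain A) as [t Ht].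
    + intros s u As Au. destruct (Htot s u As Au) as [H|H]; apply boolp.asboolW in H; auto.
    + exists t; intros s As; apply boolp.asboolT, Ht, As.
  - exists t; intros s Hts. apply boolp.asboolW, Ht, boolp.asboolT, Hts.
Qed.

Section HahnBanach.
Variable V : NormedSpace.

Lemma minimal_sublinear_below (p : V -> R) : sublinear V p ->
  exists q, sublinear V q /\ (forall x, q x <= p x) /\
    (forall r, sublinear V r -> (forall x, r x <= q x) -> forall x, q x <= r x).
Proof.
  intros Hp.
  set (T := {q : V -> R | sublinear V q /\ forall x, q x <= p x}).
  set (Rev := fun s t : T => forall x, proj1_sig t x <= proj1_sig s x).
  assert (t0 : T) by (exists p; split; auto; intros; lra).
  destruct (zorn_premaximal T t0 Rev) as [[q [Hq Hqp]] Hmax].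
  - intros s x; lra.
  - intros r s t Hrs Hst x; specialize (Hrs x); specialize (Hst x); lra.
  - intros A Htot. destruct (classic (exists s, A s)) as [[s0 As0]|Hempty].
    2:{ exists t0; intros s As; exfalso; eauto. }
    set (E := fun y r => exists s, A s /\ r = proj1_sig s y).
    destruct (sublinear_glb V E) as [b [Hb Hglb]].
    + intros y; exists (proj1_sig s0 y), s0; auto.
    + intros y; exists (- p (vopp y)). intros ? [[s [Hs Hsp]] [_ ->]]; simpl.
      pose proof (sublinear_opp V s Hs y). pose proof (Hsp (vopp y)). lra.
    + intros x y ? ? [s1 [A1 ->]] [s2 [A2 ->]].
      destruct (Htot s1 s2 A1 A2) as [H|H].
      * exists (proj1_sig s2 (vadd x y)); split; [exists s2; auto|].
        pose proof (proj1 (proj1 (proj2_sig s2)) x y). pose proof (H x). lra.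
      * exists (proj1_sig s1 (vadd x y)); split; [exists s1; auto|].
        pose proof (proj1 (proj1 (proj2_sig s1)) x y). pose proof (H y). lra.
    + intros a x ? Ha [s [As ->]].
      exists (proj1_sig s (vscal a x)); split; [exists s; auto|].
      apply (proj2 (proj1 (proj2_sig s))), Ha.
    + assert (Hbp : forall y, b y <= p y).
      { intros y. pose proof (proj1 (Hglb y) _ (ex_intro _ s0 (conj As0 eq_refl))).
        pose proof (proj2 (proj2_sig s0) y). lra. }
      exists (exist _ b (conj Hb Hbp)). intros s As y.
      exact (proj1 (Hglb y) _ (ex_intro _ s (conj As eq_refl))).
  - exists q; split; [exact Hq|split; [exact Hqp|]]. intros r Hr Hrq.
    assert (Hrp : forall x, r x <= p x) by (intros x; pose proof (Hrq x); pose proof (Hqp x); lra).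
    exact (Hmax (exist _ r (conj Hr Hrp)) Hrq).
Qed.

Theorem hahn_banach (p : V -> R) : sublinear V p ->
  exists g, linear_functional V g /\ forall x, g x <= p x.
Proof.
  intros Hp. destruct (minimal_sublinear_below p Hp) as [q [Hq [Hqp Hmin]]].
  exists q; split; [apply minimal_sublinear_linear|]; auto.
Qed.

Lemma clf_opp (f : V -> R) : cont_lin_functional f -> forall x, f (vopp x) = - f x.
Proof. intros [_ [Hh _]] x. rewrite vopp_scal, Hh; ring. Qed.

Lemma clf_sub (f : V -> R) : cont_lin_functional f -> forall x y, f (vsub x y) = f x - f y.
Proof. intros Hf x y. unfold vsub. rewrite (proj1 Hf), clf_opp; auto; ring. Qed.

(* The witness is [p y = inf {|y + l z| - l rho : l >= 0, z in D}]. *)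
Lemma separating_sublinear (D : V -> Prop) (rho : R) : (exists z, D z) ->
  ns_convex_set D -> (forall z, D z -> rho <= vnorm z) ->
  exists p, sublinear V p /\ (forall y, p y <= vnorm y) /\ (forall z, D z -> p (vopp z) <= - rho).
Proof.
  intros [z0 Dz0] Hconv Hfar.
  set (E := fun (y : V) r => exists l z, 0 <= l /\ D z /\ r = vnorm (vadd y (vscal l z)) - l * rho).
  destruct (sublinear_glb V E) as [p [Hp Hglb]].
  - intros y. eexists; exists 0, z0; repeat split; auto; lra.
  - intros y. exists (- vnorm y). intros ? [l [z [Hl [Dz ->]]]].
    pose proof (vnorm_triangle (vadd y (vscal l z)) (vopp y)) as H.
    replace (vadd (vadd y (vscal l z)) (vopp y)) with (vscal l z) in H by vring.
    rewrite vnorm_scal, vnorm_opp, Rabs_pos_eq in H by exact Hl.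
    pose proof (Rmult_le_compat_l l _ _ Hl (Hfar z Dz)). lra.
  - intros y1 y2 ? ? [l1 [z1 [Hl1 [D1 ->]]]] [l2 [z2 [Hl2 [D2 ->]]]].
    pose proof (vnorm_triangle (vadd y1 (vscal l1 z1)) (vadd y2 (vscal l2 z2))).
    destruct (Req_dec (l1 + l2) 0) as [H0|H0].
    + assert (l1 = 0) by lra. assert (l2 = 0) by lra. subst l1 l2.
      exists (vnorm (vadd (vadd y1 y2) (vscal 0 z1)) - 0 * rho); split.
      * exists 0, z1; repeat split; auto; lra.
      * rewrite !vscal_0l, !vadd_0 in *. lra.
    + set (m := l1 / (l1 + l2)).
      assert (Hm : 0 <= m <= 1).
      { unfold m; split; [apply Rmult_le_pos; [lra|left; apply Rinv_0_lt_compat; lra]|].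
        apply Rmult_le_reg_r with (l1 + l2); [lra|]. field_simplify; lra. }
      exists (vnorm (vadd (vadd y1 y2) (vscal (l1 + l2) (vadd (vscal m z1) (vscal (1 - m) z2))))
              - (l1 + l2) * rho); split.
      * exists (l1 + l2), (vadd (vscal m z1) (vscal (1 - m) z2)); repeat split; auto; lra.
      * replace (vadd (vadd y1 y2) (vscal (l1 + l2) (vadd (vscal m z1) (vscal (1 - m) z2))))
          with (vadd (vadd y1 (vscal l1 z1)) (vadd y2 (vscal l2 z2)))
          by (unfold m; vec_eq; field; lra).
        lra.
  - intros a y ? Ha [l [z [Hl [Dz ->]]]].
    exists (vnorm (vadd (vscal a y) (vscal (a * l) z)) - (a * l) * rho); split.
    + exists (a * l), z; repeat split; auto. apply Rmult_le_pos; lra.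
    + replace (vadd (vscal a y) (vscal (a * l) z)) with (vscal a (vadd y (vscal l z))) by vring.
      rewrite vnorm_scal, Rabs_pos_eq by lra. lra.
  - exists p; split; [exact Hp|split].
    + intros y. apply (proj1 (Hglb y)). exists 0, z0; repeat split; auto; [lra|].
      rewrite vscal_0l, vadd_0; ring.
    + intros z Dz.
      assert (H : p (vopp z) <= vnorm (vadd (vopp z) (vscal 1 z)) - 1 * rho).
      { apply (proj1 (Hglb (vopp z))). exists 1, z; repeat split; auto; lra. }
      rewrite vscal_1, vadd_comm, vadd_opp, vnorm0 in H. lra.
Qed.

Theorem separation (D : V -> Prop) (rho : R) : (exists z, D z) ->
  ns_convex_set D -> (forall z, D z -> rho <= vnorm z) ->
  exists f, cont_lin_functional f /\ forall z, D z -> rho <= f z.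
Proof.
  intros Hne Hconv Hfar.
  destruct (separating_sublinear D rho Hne Hconv Hfar) as [p [Hp [Hpn HpD]]].
  destruct (hahn_banach p Hp) as [g [[Hadd Hhom] Hgp]].
  assert (Hopp : forall x, g (vopp x) = - g x) by (intros x; rewrite vopp_scal, Hhom; ring).
  exists g; split; [repeat split; auto|].
  - exists 1. intros x. apply Rabs_le. split.
    + pose proof (Hgp (vopp x)). pose proof (Hpn (vopp x)). rewrite Hopp, vnorm_opp in *. lra.
    + pose proof (Hgp x). pose proof (Hpn x). lra.
  - intros z Dz. pose proof (Hgp (vopp z)). pose proof (HpD z Dz). rewrite Hopp in *. lra.
Qed.

Lemma weakly_converges_shift (u : nat -> V) (l k : V) (a : nat -> R) :
  weakly_converges u l -> Un_cv a 0 ->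
  weakly_converges (fun n => vadd (vsub (u n) l) (vscal (a n) k)) vzero.
Proof.
  intros Hu Ha f Hf eps Heps.
  assert (Hf0 : f vzero = 0) by (rewrite <- (vscal_0l _ vzero), (proj1 (proj2 Hf)); ring).
  set (b := Rabs (f k) + 1). assert (Hb : 0 < b) by (unfold b; pose proof (Rabs_pos (f k)); lra).
  destruct (Hu f Hf (eps / 2)) as [N1 HN1]; [lra|].
  destruct (Ha (eps / (2 * b))) as [N2 HN2]; [apply Rdiv_lt_0_compat; lra|].
  exists (max N1 N2); intros n Hn. specialize (HN1 n ltac:(lia)). specialize (HN2 n ltac:(lia)).
  unfold Rdist in *. rewrite Rminus_0_r in HN2.
  rewrite Hf0, Rminus_0_r, (proj1 Hf), clf_sub, (proj1 (proj2 Hf)) by exact Hf.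
  assert (Hak : Rabs (a n * f k) < eps / 2).
  { rewrite Rabs_mult. apply Rle_lt_trans with (Rabs (a n) * b).
    - apply Rmult_le_compat_l; [apply Rabs_pos|unfold b; lra].
    - pose proof (Rmult_lt_compat_r b _ _ Hb HN2) as H. field_simplify in H; lra. }
  pose proof (Rabs_triang (f (u n) - f l) (a n * f k)). lra.
Qed.

Lemma weak_limit_adherent (D : V -> Prop) (u : nat -> V) (l : V) : ns_convex_set D ->
  (exists N, forall n, (N <= n)%nat -> D (u n)) -> weakly_converges u l ->
  forall rho, 0 < rho -> exists v, D v /\ vnorm (vsub v l) < rho.
Proof.
  intros Hconv [N HN] Hweak rho Hrho. apply NNPP; intro Hfar.
  destruct (separation (fun z => exists v, D v /\ z = vsub v l) rho) as [f [Hf Hsep]].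
  - exists (vsub (u N) l), (u N); auto.
  - intros ? ? lam [v1 [D1 ->]] [v2 [D2 ->]] Hlam.
    exists (vadd (vscal lam v1) (vscal (1 - lam) v2)); split; [auto|vring].
  - intros ? [v [Dv ->]]. apply Rnot_lt_le; intro Hlt. apply Hfar; eauto.
  - destruct (Hweak f Hf rho Hrho) as [M HM].
    specialize (HM (max N M) (Nat.le_max_r _ _)).
    specialize (Hsep _ (ex_intro _ _ (conj (HN (max N M) (Nat.le_max_l _ _)) eq_refl))).
    rewrite clf_sub in Hsep by exact Hf. unfold Rdist in HM.
    pose proof (Rle_abs (f (u (max N M)) - f l)). lra.
Qed.

Lemma weak_limit_closed_convex (D : V -> Prop) (u : nat -> V) (l : V) :
  ns_closed_set D -> ns_convex_set D ->
  (exists N, forall n, (N <= n)%nat -> D (u n)) -> weakly_converges u l -> D l.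
Proof.
  intros Hcl Hconv Hev Hweak.
  destruct (functional_choice (fun (n : nat) v => D v /\ vnorm (vsub v l) < / INR (S n))) as [v Hv].
  { intros n. apply (weak_limit_adherent D u l); auto. apply Rinv_0_lt_compat, lt_0_INR; lia. }
  apply (Hcl v l (fun n => proj1 (Hv n))).
  intros eps Heps. destruct (archimed_cor1 eps Heps) as [N [HN HN0]].
  exists N; intros n Hn. pose proof (proj2 (Hv n)).
  assert (/ INR (S n) <= / INR N) by (apply Rinv_le_contravar; [apply lt_0_INR|apply le_INR]; lia).
  lra.
Qed.

End HahnBanach.

Fixpoint psum (g : nat -> R) (N : nat) : R :=
  match N with O => 0 | S n => psum g n + g n end.

Lemma psum_le (g g' : nat -> R) N : (forall n, g n <= g' n) -> psum g N <= psum g' N.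
Proof. intros H; induction N; simpl; [lra|]. specialize (H N); lra. Qed.

Lemma psum_plus (g g' : nat -> R) N : psum (fun n => g n + g' n) N = psum g N + psum g' N.
Proof. induction N; simpl; [ring|]. rewrite IHN; ring. Qed.

Lemma psum_scal (g : nat -> R) a N : psum (fun n => g n * a) N = psum g N * a.
Proof. induction N; simpl; [ring|]. rewrite IHN; ring. Qed.

Lemma psum_mono (g : nat -> R) m n : (forall k, 0 <= g k) -> (n <= m)%nat -> psum g n <= psum g m.
Proof. intros H Hnm. induction Hnm; [lra|]. simpl. specialize (H m). lra. Qed.

Lemma psum_half N : psum (fun n => (/2) ^ n) N <= 2.
Proof.
  assert (E : psum (fun n => (/2) ^ n) N = 2 - 2 * (/2) ^ N).
  { induction N; simpl; [lra|]. rewrite IHN. field. }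
  rewrite E. pose proof (pow_le (/2) N). lra.
Qed.

Lemma pow_half_vanishes (eta : R) : 0 < eta -> exists N, forall n, (N <= n)%nat -> (/2) ^ n < eta.
Proof.
  intros Heta. destruct (pow_lt_1_zero (/2)) with (y := eta) as [N HN]; auto.
  { rewrite Rabs_pos_eq; lra. }
  exists N. intros n Hn. specialize (HN n Hn). rewrite Rabs_pos_eq in HN; auto. apply pow_le; lra.
Qed.

Lemma cauchy_of_bounded_variation (a : nat -> R) (B : R) :
  (forall N, psum (fun n => Rabs (a (S n) - a n)) N <= B) -> Cauchy_crit a.
Proof.
  intros HB. set (var := psum (fun n => Rabs (a (S n) - a n))).
  assert (Hvar : Cauchy_crit var).
  { apply CV_Cauchy, growing_cv.
    - intros n. unfold var; simpl. pose proof (Rabs_pos (a (S n) - a n)). lra.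
    - exists B. intros r [i ->]. apply HB. }
  assert (Hdiff : forall n m, (n <= m)%nat -> Rabs (a m - a n) <= var m - var n).
  { intros n m Hnm. induction Hnm.
    - unfold Rminus; rewrite Rplus_opp_r, Rabs_R0; lra.
    - unfold var in *; simpl.
      replace (a (S m) - a n) with ((a (S m) - a m) + (a m - a n)) by ring.
      pose proof (Rabs_triang (a (S m) - a m) (a m - a n)). lra. }
  assert (Hmono : forall n m, (n <= m)%nat -> var n <= var m)
    by (intros; apply psum_mono; auto; intros; apply Rabs_pos).
  intros eps Heps. destruct (Hvar eps Heps) as [N HN]. exists N. intros n m Hn Hm.
  specialize (HN n m Hn Hm). unfold Rdist in *.
  destruct (Nat.le_ge_cases n m) as [Hnm|Hnm].
  - specialize (Hdiff n m Hnm). specialize (Hmono n m Hnm).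
    rewrite Rabs_minus_sym. rewrite Rabs_minus_sym, Rabs_pos_eq in HN; lra.
  - specialize (Hdiff m n Hnm). specialize (Hmono m n Hnm).
    rewrite Rabs_pos_eq in HN; lra.
Qed.

Fixpoint vsum_sel {V : NormedSpace} (s : nat -> bool) (y : nat -> V) (N : nat) : V :=
  match N with
  | O => vzero
  | S n => if s n then vadd (vsum_sel s y n) (y n) else vsum_sel s y n
  end.

Section NormalCone.
Variables (V : NormedSpace) (K : V -> Prop).
Hypothesis HK : convex_cone K.

Lemma cone_comb (w1 w2 z : V) a b : K w1 -> K w2 -> 0 <= a -> 0 <= b ->
  z = vadd (vscal a w1) (vscal b w2) -> K z.
Proof. destruct HK as [_ [Hadd Hscal]]. intros; subst z; apply Hadd; apply Hscal; auto. Qed.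

Lemma cone_vsum_sel s (y : nat -> V) N : (forall n, K (y n)) -> K (vsum_sel s y N).
Proof.
  destruct HK as [H0 [Hadd _]]. intros Hy. induction N; simpl; [exact H0|].
  destruct (s N); auto.
Qed.

Lemma vsum_sel_split s (y : nat -> V) N :
  vadd (vsum_sel s y N) (vsum_sel (fun n => negb (s n)) y N) = vsum_sel (fun _ => true) y N.
Proof.
  induction N; simpl; [apply vadd_0|]. rewrite <- IHN. destruct (s N); simpl; vring.
Qed.

(* Split the [y n] according to the sign of [f (y n)]: both partial sums lie between [0]
   and [U], so normality bounds them, and the variation of [f] is their difference. *)
Lemma cone_sums_bounded_variation (y : nat -> V) (U : V) (f : V -> R) :
  normal_cone K -> cont_lin_functional f -> (forall n, K (y n)) ->
  (forall N, cone_le K (vsum_sel (fun _ => true) y N) U) ->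
  exists B, forall N, psum (fun n => Rabs (f (y n))) N <= B.
Proof.
  intros [c [Hc Hnormal]] [Hfadd [Hfhom [M HM]]] Hy HU.
  set (pos := fun n => if Rle_dec 0 (f (y n)) then true else false).
  set (neg := fun n => negb (pos n)).
  assert (Hsplit : forall N,
            f (vsum_sel pos y N) - f (vsum_sel neg y N) = psum (fun n => Rabs (f (y n))) N).
  { assert (Hf0 : f vzero = 0) by (rewrite <- (vscal_0l _ vzero), Hfhom; ring).
    induction N; simpl; [lra|]. unfold neg, pos in *.
    destruct (Rle_dec 0 (f (y N))); simpl; rewrite ?Hfadd.
    - rewrite Rabs_pos_eq; lra.
    - rewrite Rabs_left; lra. }
  assert (Hhalf : forall s N, Rabs (f (vsum_sel s y N)) <= Rabs M * (c * vnorm U)).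
  { intros s N. eapply Rle_trans; [apply HM|].
    eapply Rle_trans; [apply Rmult_le_compat_r; [apply vnorm_ge0|apply RRle_abs]|].
    apply Rmult_le_compat_l; [apply Rabs_pos|].
    apply Hnormal; unfold cone_le.
    - replace (vsub (vsum_sel s y N) vzero) with (vsum_sel s y N) by vring.
      apply cone_vsum_sel, Hy.
    - pose proof (HU N) as HUN. unfold cone_le in HUN. rewrite <- (vsum_sel_split s y N) in HUN.
      apply (cone_comb _ (vsum_sel (fun n => negb (s n)) y N) _ 1 1 HUN); [|lra|lra|vring].
      apply cone_vsum_sel, Hy. }
  exists (2 * (Rabs M * (c * vnorm U))). intros N. rewrite <- Hsplit.
  pose proof (Rle_abs (f (vsum_sel pos y N))). pose proof (Rle_abs (- f (vsum_sel neg y N))).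
  rewrite Rabs_Ropp in *. pose proof (Hhalf pos N). pose proof (Hhalf neg N). lra.
Qed.

Lemma almost_decreasing_weakly_cauchy (u : nat -> V) (er : nat -> R) (k0 L : V) (E : R) :
  normal_cone K -> K k0 -> (forall n, 0 <= er n) -> (forall N, psum er N <= E) ->
  (forall n, cone_le K (u (S n)) (vadd (u n) (vscal (er n) k0))) ->
  (forall n, cone_le K L (u n)) ->
  weakly_cauchy u.
Proof.
  intros Hnormal Kk0 Her HE Hdecr Hlow f Hf.
  set (y := fun n => vsub (vadd (u n) (vscal (er n) k0)) (u (S n))).
  assert (Htel : forall N,
            vsum_sel (fun _ => true) y N = vadd (vsub (u O) (u N)) (vscal (psum er N) k0)).
  { induction N; simpl; [vring|]. rewrite IHN. unfold y. vring. }
  destruct (cone_sums_bounded_variation y (vadd (vsub (u O) L) (vscal E k0)) f Hnormal Hf)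
    as [B HB]; [exact Hdecr|..].
  { intros N. unfold cone_le. rewrite Htel.
    apply (cone_comb _ _ _ 1 (E - psum er N) (Hlow N) Kk0); [lra|specialize (HE N); lra|vring]. }
  destruct Hf as [Hfadd [Hfhom _]].
  apply (cauchy_of_bounded_variation _ (B + E * Rabs (f k0))).
  intros N. eapply Rle_trans.
  - apply (psum_le _ (fun n => Rabs (f (y n)) + er n * Rabs (f k0))). intros n.
    replace (f (u (S n)) - f (u n)) with (er n * f k0 - f (y n))
      by (unfold y, vsub; rewrite Hfadd, Hfadd, Hfhom, vopp_scal, Hfhom; ring).
    eapply Rle_trans; [apply Rabs_triang|].
    rewrite Rabs_Ropp, Rabs_mult, (Rabs_pos_eq (er n)) by auto. lra.
  - rewrite psum_plus, psum_scal.
    pose proof (Rmult_le_compat_r _ _ _ (Rabs_pos (f k0)) (HE N)). pose proof (HB N). lra.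
Qed.

Lemma cone_le_upper_closed (w : V) : ns_closed_set K -> ns_closed_set (fun z => cone_le K z w).
Proof.
  intros Hcl u l Hu Hlim. apply (Hcl (fun n => vsub w (u n))); [exact Hu|].
  intros eps Heps. destruct (Hlim eps Heps) as [N HN]. exists N; intros n Hn.
  replace (vsub (vsub w (u n)) (vsub w l)) with (vopp (vsub (u n) l)) by vring.
  rewrite vnorm_opp; auto.
Qed.

Lemma cone_le_upper_convex (w : V) : ns_convex_set (fun z => cone_le K z w).
Proof.
  intros z1 z2 lam H1 H2 Hlam. apply (cone_comb _ _ _ lam (1 - lam) H1 H2); [lra|lra|vring].
Qed.

Lemma normal_cone_sandwich c (z v w : V) :
  (forall x y, cone_le K vzero x -> cone_le K x y -> vnorm x <= c * vnorm y) -> 0 <= c ->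
  cone_le K vzero (vadd z w) -> cone_le K z v -> vnorm z <= c * (vnorm v + vnorm w) + vnorm w.
Proof.
  intros Hnormal Hc H0 Hzv.
  assert (Hzw : vnorm (vadd z w) <= c * vnorm (vadd v w)).
  { apply Hnormal; auto. unfold cone_le in *.
    replace (vsub (vadd v w) (vadd z w)) with (vsub v z) by vring. exact Hzv. }
  pose proof (Rmult_le_compat_l c _ _ Hc (vnorm_triangle v w)).
  pose proof (vnorm_triangle (vadd z w) (vopp w)) as Htri.
  replace (vadd (vadd z w) (vopp w)) with z in Htri by vring. rewrite vnorm_opp in Htri. lra.
Qed.

End NormalCone.

Fixpoint halving_seq (tau : R) (D : nat -> R) (n : nat) : R :=
  match n with
  | O => Rmin tau (D O) / 2
  | S m => Rmin (halving_seq tau D m) (D (S m)) / 2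
  end.

Lemma decreasing_null_sequence (P : nat -> R -> Prop) (tau : R) : 0 < tau ->
  (forall n, exists d, 0 < d /\ forall t, 0 < t < d -> P n t) ->
  exists t : nat -> R, (forall n, 0 < t n <= tau /\ t (S n) <= t n /\ P n (t n)) /\
    (forall eta, 0 < eta -> exists N, forall n, (N <= n)%nat -> t n < eta).
Proof.
  intros Htau HP. destruct (functional_choice (fun n d => 0 < d /\ forall t, 0 < t < d -> P n t))
    as [D HD]; [exact HP|].
  set (t := halving_seq tau D).
  assert (Ht : forall n, 0 < t n < D n /\ t n <= tau * (/2) ^ n).
  { unfold t; induction n as [|n [[IH1 IH2] IH3]]; simpl; unfold Rmin in *.
    - pose proof (proj1 (HD O)). destruct Rle_dec; lra.
    - pose proof (proj1 (HD (S n))). pose proof (pow_le (/2) n).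
      destruct Rle_dec; repeat split; nra. }
  exists t; split.
  - intros n. destruct (Ht n) as [[H1 H2] H3]. repeat split; auto.
    + pose proof (pow_le (/2) n). assert ((/2) ^ n <= 1) by (rewrite <- (pow1 n); apply pow_incr; lra). nra.
    + unfold t in *; simpl. unfold Rmin; destruct Rle_dec; lra.
    + apply (proj2 (HD n)); lra.
  - intros eta Heta. destruct (pow_half_vanishes (eta / tau)) as [N HN].
    { apply Rdiv_lt_0_compat; auto. }
    exists N; intros n Hn. specialize (HN n Hn). destruct (Ht n) as [_ H3].
    apply (Rmult_lt_compat_l tau) in HN; auto. replace (tau * (eta / tau)) with eta in HN by (field; lra).
    lra.
Qed.

Section DirectionalDerivative.
Variables (X Y : NormedSpace) (K : Y -> Prop) (alpha : R -> R) (A : X -> Prop).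
Variables (k0 : Y) (F : X -> Y) (C : R) (x0 h : X) (delta0 : R).
Hypothesis HK : convex_cone K.
Hypothesis Kk0 : K k0.
Hypothesis HC : 0 <= C.
Hypothesis Halpha : admissible_alpha alpha.
Hypothesis HF : strongly_paraconvex K alpha k0 F A C.
Hypothesis Hh : vnorm h = 1.
Hypothesis Hdelta0 : 0 < delta0.
Hypothesis Hline : forall t, - delta0 < t < delta0 -> A (vadd x0 (vscal t h)).

Definition ray (t : R) : X := vadd x0 (vscal t h).
Definition diff_quot (t : R) : Y := vscal (/ t) (vsub (F (ray t)) (F x0)).
Definition para_err (t : R) : R := C * (alpha t / t).

Let tau := delta0 / 2.

Lemma ray_0 : ray 0 = x0.
Proof. unfold ray; vring. Qed.

Lemma paraconvex_ray a b lam : - delta0 < a < delta0 -> - delta0 < b < delta0 -> 0 <= lam <= 1 ->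
  cone_le K (F (ray (lam * a + (1 - lam) * b)))
    (vadd (vadd (vscal lam (F (ray a))) (vscal (1 - lam) (F (ray b))))
          (vscal (C * Rmin lam (1 - lam) * alpha (Rabs (a - b))) k0)).
Proof.
  intros Ha Hb Hlam. pose proof (HF (ray a) (ray b) lam (Hline a Ha) (Hline b Hb) Hlam) as W.
  replace (vadd (vscal lam (ray a)) (vscal (1 - lam) (ray b)))
    with (ray (lam * a + (1 - lam) * b)) in W by (unfold ray; vring).
  replace (vsub (ray a) (ray b)) with (vscal (a - b) h) in W by (unfold ray; vring).
  rewrite vnorm_scal, Hh, Rmult_1_r in W. exact W.
Qed.

Lemma para_err_nonneg t : 0 < t -> 0 <= para_err t.
Proof.
  intros Ht. apply Rmult_le_pos; auto. apply Rmult_le_pos; [apply Halpha; lra|].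
  left; apply Rinv_0_lt_compat, Ht.
Qed.

Lemma para_err_vanishes eta : 0 < eta -> exists d, 0 < d /\ forall t, 0 < t < d -> para_err t < eta.
Proof.
  intros Heta. destruct Halpha as [_ [_ Hlim]].
  destruct (Hlim (eta / (C + 1))) as [d [Hd Hsmall]]; [apply Rdiv_lt_0_compat; lra|].
  exists d; split; auto. intros t Ht. unfold para_err.
  apply Rle_lt_trans with (C * (eta / (C + 1))).
  - apply Rmult_le_compat_l; auto. pose proof (Hsmall t Ht). pose proof (Rle_abs (alpha t / t)). lra.
  - apply (Rmult_lt_reg_r (C + 1)); [lra|]. field_simplify; nra.
Qed.

(* Paraconvexity along [x0 + [0, t] h] with [s = (s/t) t + (1 - s/t) 0]. *)
Lemma diff_quot_almost_monotone s t : 0 < s -> s <= t -> t < delta0 ->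
  cone_le K (diff_quot s) (vadd (diff_quot t) (vscal (para_err t) k0)).
Proof.
  intros Hs Hst Ht. set (lam := s / t).
  assert (Hlam : 0 <= lam <= 1).
  { unfold lam; split; [apply Rmult_le_pos; [lra|left; apply Rinv_0_lt_compat; lra]|].
    apply (Rmult_le_reg_r t); [lra|]. field_simplify; lra. }
  pose proof (paraconvex_ray t 0 lam ltac:(lra) ltac:(lra) Hlam) as W.
  replace (lam * t + (1 - lam) * 0) with s in W by (unfold lam; field; lra).
  rewrite ray_0, Rminus_0_r, Rabs_pos_eq in W by lra.
  set (g := C * Rmin lam (1 - lam) * alpha t) in W.
  assert (Hg : g / s <= para_err t).
  { replace (para_err t) with (C * (lam * alpha t) / s) by (unfold para_err, lam; field; lra).
    unfold Rdiv; apply Rmult_le_compat_r; [left; apply Rinv_0_lt_compat; lra|].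
    unfold g; rewrite Rmult_assoc. apply Rmult_le_compat_l; auto.
    apply Rmult_le_compat_r; [apply Halpha; lra|apply Rmin_l]. }
  apply (cone_comb Y K HK _ _ _ (/ s) (para_err t - g / s) W Kk0);
    [left; apply Rinv_0_lt_compat; lra|lra|].
  unfold diff_quot, lam; vec_eq; field; lra.
Qed.

(* From paraconvexity along [x0 + [-tau, s] h], with [0 = lam (-tau) + (1 - lam) s]
   for [lam = s / (s + tau)]. *)
Definition diff_quot_floor : Y :=
  vsub (vscal (/ tau) (vsub (F x0) (F (ray (- tau))))) (vscal (C * alpha (2 * tau) / tau) k0).

Lemma diff_quot_lower_bound s : 0 < s <= tau -> cone_le K diff_quot_floor (diff_quot s).
Proof.
  intros [Hs Hst]. assert (Htau : 0 < tau) by (unfold tau; lra).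
  set (lam := s / (s + tau)).
  assert (Hlam : 0 <= lam <= 1).
  { unfold lam; split; [apply Rmult_le_pos; [lra|left; apply Rinv_0_lt_compat; lra]|].
    apply (Rmult_le_reg_r (s + tau)); [lra|]. field_simplify; lra. }
  pose proof (paraconvex_ray (- tau) s lam ltac:(unfold tau in *; lra) ltac:(unfold tau in *; lra) Hlam) as W.
  replace (lam * - tau + (1 - lam) * s) with 0 in W by (unfold lam; field; lra).
  rewrite ray_0 in W. replace (Rabs (- tau - s)) with (tau + s) in W by (rewrite Rabs_left; lra).
  set (g := C * Rmin lam (1 - lam) * alpha (tau + s)) in W.
  set (a := (s + tau) / (s * tau)).
  assert (Ha : 0 <= a) by (unfold a; apply Rmult_le_pos; [lra|left; apply Rinv_0_lt_compat; nra]).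
  assert (Hg : g * a <= C * alpha (2 * tau) / tau).
  { replace (C * alpha (2 * tau) / tau) with (C * (lam * alpha (2 * tau)) * a)
      by (unfold lam, a; field; lra).
    apply Rmult_le_compat_r; auto. unfold g; rewrite Rmult_assoc. apply Rmult_le_compat_l; auto.
    apply Rmult_le_compat; [apply Rmin_glb; lra|apply Halpha; lra|apply Rmin_l|apply Halpha; lra]. }
  apply (cone_comb Y K HK _ _ _ a (C * alpha (2 * tau) / tau - g * a) W Kk0); [auto|lra|].
  unfold diff_quot, diff_quot_floor, lam, a; vec_eq; field; lra.
Qed.

Lemma diff_quot_weak_limit : weakly_seq_complete Y -> normal_cone K ->
  exists (t : nat -> R) (d : Y),
    (forall n, 0 < t n <= tau /\ t (S n) <= t n /\ para_err (t n) <= (/2) ^ n) /\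
    (forall eta, 0 < eta -> exists N, forall n, (N <= n)%nat -> t n < eta) /\
    weakly_converges (fun n => diff_quot (t n)) d.
Proof.
  intros HW Hnormal.
  destruct (decreasing_null_sequence (fun n s => para_err s <= (/2) ^ n) tau) as [t [Ht Hnull]].
  { unfold tau; lra. }
  { intros n. destruct (para_err_vanishes ((/2) ^ n)) as [d [Hd Hsmall]]; [apply pow_lt; lra|].
    exists d; split; auto. intros s Hs; left; auto. }
  destruct (HW (fun n => diff_quot (t n))) as [d Hd].
  { apply (almost_decreasing_weakly_cauchy Y K HK _ (fun n => para_err (t n)) k0 diff_quot_floor 2);
      auto.
    - intros n; apply para_err_nonneg, Ht.
    - intros N. eapply Rle_trans; [|apply (psum_half N)]. apply psum_le; intros n; apply Ht.
    - intros n. destruct (Ht n) as [[Hpos Htau] [Hdecr _]].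
      apply diff_quot_almost_monotone; [apply Ht|auto|unfold tau in *; lra].
    - intros n; apply diff_quot_lower_bound, Ht. }
  exists t, d; auto.
Qed.

Section WeakLimit.
Variables (t : nat -> R) (d : Y).
Hypothesis Ht : forall n, 0 < t n <= tau /\ t (S n) <= t n /\ para_err (t n) <= (/2) ^ n.
Hypothesis Hnull : forall eta, 0 < eta -> exists N, forall n, (N <= n)%nat -> t n < eta.
Hypothesis Hd : weakly_converges (fun n => diff_quot (t n)) d.

Lemma weak_limit_lower s : ns_closed_set K -> 0 < s <= tau ->
  cone_le K d (vadd (diff_quot s) (vscal (para_err s) k0)).
Proof.
  intros Hcl Hs.
  apply (weak_limit_closed_convex Y (fun z => cone_le K z (vadd (diff_quot s) (vscal (para_err s) k0)))
           (fun n => diff_quot (t n)));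
    [apply cone_le_upper_closed, Hcl|apply cone_le_upper_convex, HK| |exact Hd].
  destruct (Hnull s) as [N HN]; [lra|]. exists N; intros n Hn.
  apply diff_quot_almost_monotone; [apply Ht|left; auto|unfold tau in *; lra].
Qed.

(* [q(t_n) - d + e(t_n) k0] tends weakly to [0] and each term dominates [q(s) - d] for
   small [s]; Mazur turns this into a dominating vector of small norm. *)
Lemma weak_limit_upper rho : 0 < rho ->
  exists v m, vnorm v < rho /\ 0 < m /\ forall s, 0 < s < m -> cone_le K (vsub (diff_quot s) d) v.
Proof.
  intros Hrho.
  set (D := fun v => exists m, 0 < m /\ forall s, 0 < s < m -> cone_le K (vsub (diff_quot s) d) v).
  set (u := fun n => vadd (vsub (diff_quot (t n)) d) (vscal (para_err (t n)) k0)).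
  destruct (weak_limit_adherent Y D u vzero) with (rho := rho) as [v [[m [Hm Hv]] Hsmall]]; auto.
  - intros v1 v2 lam [m1 [Hm1 H1]] [m2 [Hm2 H2]] Hlam. exists (Rmin m1 m2); split.
    { unfold Rmin; destruct Rle_dec; lra. }
    intros s Hs. pose proof (Rmin_l m1 m2). pose proof (Rmin_r m1 m2).
    apply (cone_comb Y K HK _ _ _ lam (1 - lam) (H1 s ltac:(lra)) (H2 s ltac:(lra)));
      [lra|lra|vring].
  - exists O; intros n _. exists (t n); split; [apply Ht|]. intros s Hs.
    pose proof (diff_quot_almost_monotone s (t n)) as Hmono. unfold cone_le in *.
    replace (vsub (u n) (vsub (diff_quot s) d))
      with (vsub (vadd (diff_quot (t n)) (vscal (para_err (t n)) k0)) (diff_quot s)) by (unfold u; vring).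
    apply Hmono; [lra|lra|]. destruct (Ht n); unfold tau in *; lra.
  - apply weakly_converges_shift; [exact Hd|]. intros eps Heps.
    destruct (pow_half_vanishes eps Heps) as [N HN]. exists N; intros n Hn.
    unfold Rdist. rewrite Rminus_0_r, Rabs_pos_eq by apply para_err_nonneg, Ht.
    destruct (Ht n) as [_ [_ He]]. specialize (HN n Hn). lra.
  - exists v, m. repeat split; auto.
    replace v with (vsub v vzero) by vring. exact Hsmall.
Qed.

Lemma diff_quot_converges : ns_closed_set K -> normal_cone K ->
  forall eps, 0 < eps -> exists delta, 0 < delta /\
    forall s, 0 < s < delta -> vnorm (vsub (diff_quot s) d) < eps.
Proof.
  intros Hcl [c [Hc Hnormal]] eps Heps.
  set (nk := vnorm k0 + 1). assert (Hnk : 0 < nk) by (unfold nk; pose proof (vnorm_ge0 _ k0); lra).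
  destruct (weak_limit_upper (eps / (2 * c))) as [v [m [Hv [Hm Hdom]]]].
  { apply Rdiv_lt_0_compat; lra. }
  destruct (para_err_vanishes (eps / (2 * (c + 1) * nk))) as [de [Hde Herr]].
  { apply Rdiv_lt_0_compat; [lra|]. apply Rmult_lt_0_compat; lra. }
  exists (Rmin (Rmin m tau) de); split.
  { unfold tau, Rmin; repeat destruct Rle_dec; lra. }
  intros s Hs.
  pose proof (Rmin_l (Rmin m tau) de) as Hs1. pose proof (Rmin_r (Rmin m tau) de) as Hs2.
  pose proof (Rmin_l m tau) as Hs3. pose proof (Rmin_r m tau) as Hs4.
  set (e := para_err s). assert (He : 0 <= e < eps / (2 * (c + 1) * nk)).
  { split; [apply para_err_nonneg|apply Herr]; lra. }
  assert (Hsand := normal_cone_sandwich Y K c (vsub (diff_quot s) d) v (vscal e k0)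
                     Hnormal (Rlt_le _ _ Hc)).
  rewrite vnorm_scal, Rabs_pos_eq in Hsand by apply He.
  assert (Hz : vnorm (vsub (diff_quot s) d) <= c * vnorm v + (c + 1) * (e * vnorm k0)).
  { eapply Rle_trans; [apply Hsand|lra].
    - pose proof (weak_limit_lower s Hcl ltac:(lra)) as Hlow. unfold cone_le in *.
      replace (vsub (vadd (vsub (diff_quot s) d) (vscal e k0)) vzero)
        with (vsub (vadd (diff_quot s) (vscal e k0)) d) by vring.
      exact Hlow.
    - apply Hdom; lra. }
  assert (Hcv : c * vnorm v < eps / 2).
  { pose proof (Rmult_lt_compat_l c _ _ Hc Hv) as Hlt.
    replace (c * (eps / (2 * c))) with (eps / 2) in Hlt by (field; lra). exact Hlt. }
  assert (Hek : 2 * (c + 1) * nk * e < eps).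
  { pose proof (Rmult_lt_compat_l (2 * (c + 1) * nk) _ _ ltac:(nra) (proj2 He)) as Hlt.
    replace (2 * (c + 1) * nk * (eps / (2 * (c + 1) * nk))) with eps in Hlt by (field; lra).
    exact Hlt. }
  assert (Hk0 : e * vnorm k0 <= e * nk) by (apply Rmult_le_compat_l; [apply He|unfold nk; lra]).
  pose proof (Rmult_le_compat_l (c + 1) _ _ ltac:(lra) Hk0). lra.
Qed.

End WeakLimit.

End DirectionalDerivative.

Theorem theorem4p2 (X Y : NormedSpace) (K : Y -> Prop) (alpha : R -> R)
  (A : X -> Prop) (k0 : Y) (F : X -> Y) (C : R) (x0 h : X) :
  banach Y -> weakly_seq_complete Y ->
  convex_cone K -> ns_closed_set K -> normal_cone K ->
  admissible_alpha alpha ->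
  ns_convex_set A ->
  K k0 -> k0 <> vzero ->
  0 <= C -> strongly_paraconvex K alpha k0 F A C ->
  A x0 -> vnorm h = 1 ->
  (exists delta0, 0 < delta0 /\
     forall t, - delta0 < t < delta0 -> A (vadd x0 (vscal t h))) ->
  exists d : Y, forall eps, 0 < eps -> exists delta, 0 < delta /\
    forall t, 0 < t < delta ->
      vnorm (vsub (vscal (/ t) (vsub (F (vadd x0 (vscal t h))) (F x0))) d) < eps.
Proof.
  intros _ HW HK Hcl Hnormal Halpha _ Kk0 _ HC HF _ Hh [delta0 [Hdelta0 Hline]].
  destruct (diff_quot_weak_limit X Y K alpha A k0 F C x0 h delta0 HK Kk0 HC Halpha HF Hh
              Hdelta0 Hline HW Hnormal) as [t [d [Ht [Hnull Hd]]]].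
  exists d.
  exact (diff_quot_converges X Y K alpha A k0 F C x0 h delta0 HK Kk0 HC Halpha HF Hh
           Hdelta0 Hline t d Ht Hnull Hd Hcl Hnormal).
Qed.
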